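(* Let $H$ be a $3$-graph with $s$ vertices, let $t\geq 1$, and let $G$ be a $3$-graph that is $H\sqcup S_{2,t}$-free. Let $v_1,v_2\in V(G)$ be distinct. If $G-\{v_1\}$ contains a copy of $H$ and $G-\{v_1,v_2\}$ contains no copy of $H$, then $\omega\big((G-\{v_2\})_{v_1}\big)\leq s+t-1$.
   Context: A $3$-graph $G$ is $F$-free if it contains no subgraph isomorphic to $F$. $S_{2,t}$ is the $3$-graph with vertex set $\{w_1,w_2,u_1,\dots,u_t\}$ and edge set $\{w_1w_2u_1,\dots,w_1w_2u_t\}$. $\sqcup$ denotes vertex-disjoint union. For $S\subseteq V(G)$, $G-S$ is the subgraph of $G$ induced by $V(G)\setminus S$. For a $3$-graph $G'$ and $v\in V(G')$, the link graph of $v$ is the $2$-graph $G'_v=\{ab: vab\in E(G')\}$, and $\omega(\cdot)$ denotes the order of a maximum clique of a $2$-graph. *)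

From mathcomp Require Import all_boot.
Set Implicit Arguments. Unset Strict Implicit. Unset Printing Implicit Defensive.

Definition is_3graph (V : finType) (VG : {set V}) (E : {set {set V}}) : Prop :=
  forall e, e \in E -> e \subset VG /\ #|e| = 3.

Definition contains_copy (W V : finType) (VH : {set W}) (EH : {set {set W}})
  (VG : {set V}) (EG : {set {set V}}) : Prop :=
  exists f : W -> V,
    {in VH &, injective f} /\ (forall x, x \in VH -> f x \in VG) /\
    (forall e, e \in EH -> f @: e \in EG).

Definition del_vert (V : finType) (S : {set V}) (VG : {set V}) : {set V} := VG :\: S.
Definition del_edges (V : finType) (S : {set V}) (VG : {set V}) (EG : {set {set V}})
  : {set {set V}} := [set e in EG | e \subset VG :\: S].

(* S_{2,t} on vertex type bool + 'I_t : w1 = inl true, w2 = inl false, u_i = inr i. *)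
Definition S2t_vert (t : nat) : {set (bool + 'I_t)%type} := setT.
Definition S2t_edges (t : nat) : {set {set (bool + 'I_t)%type}} :=
  [set [set inl true; inl false; inr i] | i : 'I_t].

Definition dunion_vert (W U : finType) (VH : {set W}) (VF : {set U}) : {set (W + U)%type} :=
  ((inl : W -> (W + U)%type) @: VH) :|: ((inr : U -> (W + U)%type) @: VF).
Definition dunion_edges (W U : finType) (EH : {set {set W}}) (EF : {set {set U}})
  : {set {set (W + U)%type}} :=
  [set (inl : W -> (W + U)%type) @: e | e : {set W} in EH] :|: [set (inr : U -> (W + U)%type) @: e | e : {set U} in EF].

Definition link_vert (V : finType) (VG : {set V}) (v : V) : {set V} := VG :\ v.
Definition link_edges (V : finType) (EG : {set {set V}}) (v : V) : {set {set V}} :=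
  [set (e :\ v) | e : {set V} in EG & v \in e].

Definition is_clique (V : finType) (VL : {set V}) (EL : {set {set V}}) (K : {set V}) : bool :=
  (K \subset VL) && [forall a in K, forall b in K, (a != b) ==> ([set a; b] \in EL)].
Definition clique_number (V : finType) (VL : {set V}) (EL : {set {set V}}) : nat :=
  \max_(K : {set V} | is_clique VL EL K) #|K|.

From mathcomp Require Import all_boot zify.

Set Implicit Arguments.
Unset Strict Implicit.
Unset Printing Implicit Defensive.

(* Suppose the link of v1 in G - v2 has a clique K of size s + t, and let f be a
   copy of H in G - v1.  Since G - {v1, v2} contains no copy of H, v2 lies in
   the image of f; as v2 is not in K, at most s - 1 vertices of K are used by f,
   so at least t + 1 vertices of K lie outside the copy.  Take one of them, w,
   and t others u_1, ..., u_t: every v1 w u_i is an edge because K is a clique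
   of the link of v1, so these form an S_{2,t} disjoint from the copy of H,
   i.e. a copy of H ⊔ S_{2,t} in G. *)

Definition embedding (W V : finType) (f : W -> V) (VH : {set W}) (EH : {set {set W}})
    (VG : {set V}) (EG : {set {set V}}) : Prop :=
  {in VH &, injective f} /\ (forall x, x \in VH -> f x \in VG) /\
  (forall e, e \in EH -> f @: e \in EG).

Lemma ltn_cardsD_add (T : finType) (K A : {set T}) x :
  x \in A -> x \notin K -> #|K| < #|K :\: A| + #|A|.
Proof.
move=> xA xK; rewrite -(cardsID A K) addnC ltn_add2l.
apply: proper_card; apply/properP; split; first exact: subsetIr.
by exists x; rewrite // inE (negbTE xK).
Qed.

Lemma inj_ord_of_card (T : finType) (A : {set T}) t :
  t <= #|A| -> exists2 u : 'I_t -> T, injective u & forall i, u i \in A.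
Proof.
move=> tA; exists (fun i => enum_val (widen_ord tA i)) => [i j /enum_val_inj|i].
  by move/(congr1 val)=> /= /val_inj.
exact: enum_valP.
Qed.

Lemma link_clique_edge (V : finType) (VL : {set V}) (EL : {set {set V}}) v K a b :
  is_clique (link_vert VL v) (link_edges EL v) K ->
  a \in K -> b \in K -> a != b -> [set v; a; b] \in EL.
Proof.
case/andP=> _ /forallP/(_ a)/implyP/(_ _)/forallP/(_ b)/implyP clK aK bK ab.
have /imsetP[e] := implyP (clK aK bK) ab; rewrite inE => /andP[eL ve] eab.
by rewrite -setUA eab setD1K.
Qed.

Lemma dunion_vert_inl (W U : finType) (VH : {set W}) (VF : {set U}) a :
  (inl a \in dunion_vert VH VF) = (a \in VH).
Proof.
rewrite inE (mem_imset _ _ (@inl_inj _ _)) orbC.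
by case: imsetP => // -[].
Qed.

Lemma dunion_vert_inr (W U : finType) (VH : {set W}) (VF : {set U}) b :
  (inr b \in dunion_vert VH VF) = (b \in VF).
Proof.
rewrite inE (mem_imset _ _ (@inr_inj _ _)).
by case: imsetP => // -[].
Qed.

Section Embeddings.

Variables (W V : finType) (VH : {set W}) (EH : {set {set W}}).
Variables (VG : {set V}) (EG : {set {set V}}).

Lemma embedding_del_subgraph (S : {set V}) (f : W -> V) :
  embedding f VH EH (del_vert S VG) (del_edges S VG EG) -> embedding f VH EH VG EG.
Proof.
by case=> finj [fV fE]; split; [done | split] => [x /fV | e /fE]; rewrite inE => /andP[].
Qed.

Lemma embedding_del_vertU (S T : {set V}) (f : W -> V) :
  is_3graph VH EH ->
  embedding f VH EH (del_vert S VG) (del_edges S VG EG) -> [disjoint f @: VH & T] ->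
  embedding f VH EH (del_vert (S :|: T) VG) (del_edges (S :|: T) VG EG).
Proof.
move=> H3 [finj [fV fE]] fT.
have fVT x : x \in VH -> f x \in VG :\: (S :|: T).
  by move=> xH; rewrite -setDDl in_setD (fV x xH) andbT (disjointFr fT) ?imset_f.
split; [done | split=> // e eH]; rewrite inE; have /fE := eH; rewrite inE => /andP[-> _] /=.
apply/subsetP=> _ /imsetP[x xe ->]; apply: fVT.
by have [eV _] := H3 e eH; exact: (subsetP eV).
Qed.

Lemma embedding_dunion (U : finType) (VF : {set U}) (EF : {set {set U}})
    (f : W -> V) (g : U -> V) :
  embedding f VH EH VG EG -> embedding g VF EF VG EG -> [disjoint f @: VH & g @: VF] ->
  embedding (fun x => match x with inl a => f a | inr b => g b end)
    (dunion_vert VH VF) (dunion_edges EH EF) VG EG.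
Proof.
move=> [finj [fV fE]] [ginj [gV gE]] fg.
have fgF a b : a \in VH -> b \in VF -> f a != g b.
  by move=> aH bF; apply: contraTneq (imset_f g bF) => <-; rewrite (disjointFr fg) ?imset_f.
split; [|split].
- move=> [a|a] [b|b]; rewrite ?dunion_vert_inl ?dunion_vert_inr => aS bS /=.
  + by move/finj->.
  + by move/eqP; rewrite (negbTE (fgF _ _ aS bS)).
  + by move/esym/eqP; rewrite (negbTE (fgF _ _ bS aS)).
  + by move/ginj->.
- by move=> [a|b]; rewrite ?dunion_vert_inl ?dunion_vert_inr; [exact: fV | exact: gV].
- move=> E; rewrite in_setU => /orP[] /imsetP[e eE ->]; rewrite -imset_comp.
    exact: fE.
  exact: gE.
Qed.

End Embeddings.

Definition S2t_map (V : finType) (t : nat) (w1 w2 : V) (u : 'I_t -> V) :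
    (bool + 'I_t)%type -> V :=
  fun x => match x with inl b => if b then w1 else w2 | inr i => u i end.

Lemma disjoint_S2t_map (V : finType) (A : {set V}) t (w1 w2 : V) (u : 'I_t -> V) :
  w1 \notin A -> w2 \notin A -> (forall i, u i \notin A) ->
  [disjoint A & S2t_map w1 w2 u @: S2t_vert t].
Proof.
move=> w1A w2A uA; rewrite disjoint_sym disjoint_subset.
by apply/subsetP => _ /imsetP[[[]|i] _ ->]; rewrite inE /= ?uA.
Qed.

Lemma embedding_S2t (V : finType) (VG : {set V}) (EG : {set {set V}}) t
    (w1 w2 : V) (u : 'I_t -> V) :
  injective u -> w1 != w2 -> w1 \in VG -> w2 \in VG ->
  (forall i, u i \in VG :\: [set w1; w2]) -> (forall i, [set w1; w2; u i] \in EG) ->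
  embedding (S2t_map w1 w2 u) (S2t_vert t) (S2t_edges t) VG EG.
Proof.
move=> uinj w12 w1G w2G uG uE.
have uw1 i : u i != w1 by have := uG i; rewrite !inE negb_or -andbA => /andP[].
have uw2 i : u i != w2 by have := uG i; rewrite !inE negb_or -andbA => /and3P[].
split; [|split].
- move=> [[]|i] [[]|j] _ _ //=.
  all: try by move/eqP; rewrite ?(negbTE w12) ?(negbTE (uw1 _)) ?(negbTE (uw2 _)).
  all: try by move/esym/eqP; rewrite ?(negbTE w12) ?(negbTE (uw1 _)) ?(negbTE (uw2 _)).
  by move/uinj->.
- by move=> [[]|i] _ //=; have := uG i; rewrite inE => /andP[].
- move=> _ /imsetP[i _ ->].
  by rewrite ?imsetU1 ?imsetU !imset_set1; exact: uE.
Qed.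

Theorem claim3p6 (W V : finType) (VH : {set W}) (EH : {set {set W}}) (s t : nat)
  (VG : {set V}) (EG : {set {set V}}) (v1 v2 : V) :
  is_3graph VH EH -> #|VH| = s -> 1 <= t ->
  is_3graph VG EG ->
  ~ contains_copy (dunion_vert VH (S2t_vert t)) (dunion_edges EH (S2t_edges t)) VG EG ->
  v1 \in VG -> v2 \in VG -> v1 != v2 ->
  contains_copy VH EH (del_vert [set v1] VG) (del_edges [set v1] VG EG) ->
  ~ contains_copy VH EH (del_vert [set v1; v2] VG) (del_edges [set v1; v2] VG EG) ->
  clique_number
    (link_vert (del_vert [set v2] VG) v1)
    (link_edges (del_edges [set v2] VG EG) v1) <= s + t - 1.
Proof.
move=> H3 Hs t_gt0 _ Hfree v1G v2G v12 [f Hf] Hno.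
apply/bigmax_leqP => K Kcl; rewrite leqNgt; apply/negP => HK.
have KV a : a \in K -> [&& a != v1, a != v2 & a \in VG].
  by move=> aK; have := subsetP (proj1 (andP Kcl)) a aK; rewrite !inE.
have v1f : v1 \notin f @: VH.
  have [_ [fV _]] := Hf.
  by apply/imsetP=> -[x /fV fxV v1fx]; move: fxV; rewrite -v1fx !inE eqxx.
have v2f : v2 \in f @: VH.
  apply/negPn/negP => v2f; apply: Hno; exists f.
  by apply: embedding_del_vertU => //; rewrite disjoint_sym disjoints1.
set B := K :\: f @: VH.
have t_lt_B : t < #|B|.
  have v2K : v2 \notin K by apply/negP => /KV /and3P[_ /eqP].
  have := ltn_cardsD_add v2f v2K; have := leq_imset_card f VH; rewrite /B; lia.
have [w wB] : {w | w \in B} by apply/sigW/card_gt0P; lia.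
have [u uinj uB] : exists2 u : 'I_t -> V, injective u & forall i, u i \in B :\ w.
  by apply: inj_ord_of_card; rewrite (cardsD1 w B) wB in t_lt_B.
have [wf wK] : w \notin f @: VH /\ w \in K by move: wB; rewrite inE => /andP.
have uP i : [/\ u i != w, u i \notin f @: VH & u i \in K].
  by have := uB i; rewrite !inE => /and3P.
apply: Hfree; exists (fun x => match x with inl a => f a | inr b => S2t_map v1 w u b end).
apply: embedding_dunion; first exact: embedding_del_subgraph Hf.
- have [wv1 _ wG] := and3P (KV w wK).
  apply: embedding_S2t => // [|i|i]; first by rewrite eq_sym.
    have [uw _ /KV /and3P[uv1 _ uG]] := uP i.
    by rewrite !inE negb_or uv1 uw uG.
  have [uw _ uK] := uP i.
  by have := link_clique_edge Kcl wK uK; rewrite eq_sym uw inE => /(_ isT) /andP[].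
- by apply: disjoint_S2t_map => // i; case: (uP i).
Qed.
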